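(* For $n\in\mathbb{Z}_S\setminus\{0\}$ let $D_n=\{(\mathbf v^1,\mathbf v^2)\in P(\mathbb{Z}_S^2)\times P(\mathbb{Z}_S^2):\det(\mathbf v^1,\mathbf v^2)=n\}$. Then $D_n$ is invariant under the diagonal action of $\Gamma_2=\mathrm{SL}_2(\mathbb{Z}_S)$ and is the disjoint union of exactly $\varphi(\mathrm d(n))$ distinct $\Gamma_2$-orbits, with representatives $\begin{pmatrix}1&\ell\\0&n\end{pmatrix}$ for $\ell\in\{0,1,\dots,\mathrm d(n)-1\}$ with $\gcd(\ell,\mathrm d(n))=1$.
   Context: $S=\{\infty,p_1,\dots,p_s\}$ with distinct primes, $\mathbb{Z}_S=\mathbb{Z}[p_1^{-1},\dots,p_s^{-1}]$, $P(\mathbb{Z}_S^2)=\mathrm{SL}_2(\mathbb{Z}_S)\mathbf e_1$. Pairs of vectors are viewed as $2\times2$ matrices with those columns. For $n\in\mathbb{Z}_S\setminus\{0\}$, $\mathrm d(n)=\prod_{p\in S}|n|_p$, which equals $|m|$ where $n=m p_1^{k_1}\cdots p_s^{k_s}$ with $m\in\mathbb{Z}$ coprime to $p_1\cdots p_s$. $\varphi$ is Euler's totient function. *)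

(* Z_S is modelled inside the rationals [rat]. *)
From HB Require Import structures.
From mathcomp Require Import all_boot all_order all_algebra.
Set Implicit Arguments. Unset Strict Implicit. Unset Printing Implicit Defensive.
Import Order.TTheory GRing.Theory Num.Theory.
Local Open Scope ring_scope.

(* S = {oo, p_1, ..., p_s} is represented by the list ps = [:: p_1; ...; p_s]. *)

(* x \in Z_S = Z[1/p_1, ..., 1/p_s]: every prime dividing the (reduced)
   denominator of x is one of the p_i. *)
Definition inZS (ps : seq nat) (x : rat) : bool :=
  all (fun p => p \in ps) (primes `|denq x|%N).

Definition pairmx (v1 v2 : 'cV[rat]_2) : 'M[rat]_2 :=
  \matrix_(i < 2, j < 2) if j == ord0 then v1 i ord0 else v2 i ord0.

Definition vec2 (a b : rat) : 'cV[rat]_2 :=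
  \col_(i < 2) if i == ord0 then a else b.

Definition e1 : 'cV[rat]_2 := vec2 1 0.

Definition inSL2ZS (ps : seq nat) (g : 'M[rat]_2) : Prop :=
  (forall i j, inZS ps (g i j)) /\ \det g = 1.

(* P(Z_S^2) = SL_2(Z_S) e_1. *)
Definition inPZS2 (ps : seq nat) (v : 'cV[rat]_2) : Prop :=
  exists g, inSL2ZS ps g /\ v = g *m e1.

Definition inDn (ps : seq nat) (n : rat) (v1 v2 : 'cV[rat]_2) : Prop :=
  inPZS2 ps v1 /\ inPZS2 ps v2 /\ \det (pairmx v1 v2) = n.

(* d(n) = prod_{p in S} |n|_p, i.e. |m| where n = m p_1^k_1 ... p_s^k_s with
   m coprime to p_1 ... p_s: the part of |numerator n| prime to the p_i. *)
Definition dS (ps : seq nat) (n : rat) : nat :=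
  let N := `|numq n|%N in
  \prod_(p <- primes N | p \notin ps) p ^ logn p N.

Definition same_orbit (ps : seq nat) (v1 v2 w1 w2 : 'cV[rat]_2) : Prop :=
  exists g, inSL2ZS ps g /\ g *m v1 = w1 /\ g *m v2 = w2.

(* The representative (1 l; 0 n), columns (1,0) and (l,n). *)
Definition rep_col2 (l : nat) (n : rat) : 'cV[rat]_2 := vec2 l%:R n.

From HB Require Import structures.
From mathcomp Require Import all_boot all_order all_algebra.
From mathcomp Require Import ring zify.
Import Order.TTheory GRing.Theory Num.Theory.
Local Open Scope ring_scope.

(* For a modulus d prime to S one has Z_S / d Z_S = Z / d Z, and n / d(n) is a unit
   of Z_S, so modulo n every element of Z_S is congruent to a unique l in [0, d(n)).
   If v1 = h e1 with h in SL_2(Z_S), then h^-1 moves a pair of D_n to (e1, (x, n)).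
   The stabiliser of e1 consists of the matrices (1 t; 0 1), which replace x by
   x + t n, i.e. reduce x modulo d(n).  Since (x, n) is the first column of a matrix
   of determinant 1, x satisfies a Bezout relation with n, hence l = x mod d(n) is
   prime to d(n); conversely a Bezout relation completes (l, n) to a matrix of
   SL_2(Z_S). *)

Definition piS (ps : seq nat) : nat_pred := [pred p | p \in ps].

Definition ZS (ps : seq nat) : {pred rat} := inZS ps.

Lemma ZS_pnat_denq ps x : (x \in ZS ps) = (piS ps).-nat `|denq x|%N.
Proof. by rewrite /pnat absz_gt0 denq_neq0. Qed.

Lemma ZS_scaleP ps x :
  reflect (exists2 N : nat, (piS ps).-nat N & x * N%:R \is a Num.int) (x \in ZS ps).
Proof.
apply: (iffP idP) => [Zx | [N pN /intrP [z xN]]].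
  exists `|denq x|%N; first by rewrite -ZS_pnat_denq.
  by rewrite natr_absz gtr0_norm ?denq_gt0 // -numqE intr_int.
have numN : numq x * N%:Z = z * denq x.
  by apply: (@intr_inj rat); rewrite !rmorphM /= numqE -xN; ring.
have den_dvd : (denq x %| N%:Z)%Z.
  rewrite -(@Gauss_dvdzr _ (numq x)); last first.
    by rewrite coprimezE coprime_sym coprime_num_den.
  by rewrite numN dvdz_mull.
by rewrite ZS_pnat_denq (pnat_dvd den_dvd pN).
Qed.

Lemma ZS_subring_closed ps : subring_closed (ZS ps).
Proof.
split=> [//|x y /ZS_scaleP[M pM xM] /ZS_scaleP[N pN yN]|
              x y /ZS_scaleP[M pM xM] /ZS_scaleP[N pN yN]];
  apply/ZS_scaleP; exists (M * N)%N; rewrite ?pnatM ?pM // natrM.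
  have -> : (x - y) * (M%:R * N%:R) = x * M%:R * N%:R - y * N%:R * M%:R by ring.
  by apply: rpredB; apply: rpredM; rewrite ?rpred_nat.
have -> : x * y * (M%:R * N%:R) = x * M%:R * (y * N%:R) by ring.
exact: rpredM.
Qed.

HB.instance Definition _ ps :=
  GRing.isSubringClosed.Build rat (ZS ps) (ZS_subring_closed ps).

Lemma coprime_rat_bezout {m n : nat} : coprime m n ->
  exists u v : int, u%:~R * m%:R + v%:~R * n%:R = 1 :> rat.
Proof.
move=> co; have [[u v] /= bez] := coprimezP m n (etrans (coprimezE m n) co).
by exists u, v; have := congr1 (intr : int -> rat) bez; rewrite rmorphD !rmorphM rmorph1.
Qed.

Section SIntegers.
Context {ps : seq nat}.
Local Notation pi := (piS ps).

Lemma ZS_natV P : pi.-nat P -> P%:R^-1 \in ZS ps.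
Proof.
move=> pP; apply/ZS_scaleP; exists P => //.
by rewrite mulVf ?rpred1 // pnatr_eq0 -lt0n; case/andP: pP.
Qed.

Lemma ZS_denqV x : x \in ZS ps -> (denq x)%:~R^-1 \in ZS ps.
Proof.
by rewrite ZS_pnat_denq => /ZS_natV; rewrite natr_absz gtr0_norm ?denq_gt0.
Qed.

Lemma ZS_dvdz (m : int) (D : nat) :
  pi^'.-nat D -> m%:~R / D%:R \in ZS ps -> (D %| m)%Z.
Proof.
move=> pD /ZS_scaleP [N pN /intrP [z mN]].
have D0 : D%:R != 0 :> rat by rewrite pnatr_eq0 -lt0n; case/andP: pD.
have mND : m * N%:Z = z * D%:Z.
  by apply: (@intr_inj rat); rewrite !rmorphM /= -mN; field.
have coDN : coprimez D N by rewrite coprimezE /= coprime_sym (pnat_coprime pN pD).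
by rewrite -(Gauss_dvdzl _ coDN) mND dvdz_mull.
Qed.

Lemma ZS_bezout_coprime {l D : nat} a b : pi^'.-nat D ->
  a \in ZS ps -> b \in ZS ps -> l%:R * a + D%:R * b = 1 -> coprime l D.
Proof.
move=> pD Za Zb bez; set g := gcdn l D.
have pg : pi^'.-nat g by apply: pnat_dvd pD; apply: dvdn_gcdr.
have g0 : g%:R != 0 :> rat by rewrite pnatr_eq0 -lt0n; case/andP: pg.
have /dvdnP [l' def_l] : (g %| l)%N by apply: dvdn_gcdl.
have /dvdnP [D' def_D] : (g %| D)%N by apply: dvdn_gcdr.
have Zg : 1 / g%:R \in ZS ps.
  have -> : 1 / g%:R = l'%:R * a + D'%:R * b.
    apply: (mulIf g0); rewrite mulfVK // -[X in X = _]bez def_l def_D !natrM.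
    ring.
  by rewrite rpredD ?rpredM ?rpred_nat.
by have := ZS_dvdz 1 g pg Zg; rewrite dvdzE dvdn1.
Qed.

Lemma ZS_congr_nat_eq {l l' D : nat} : pi^'.-nat D -> (l < D)%N -> (l' < D)%N ->
  (l'%:R - l%:R) / D%:R \in ZS ps -> l = l'.
Proof.
move=> pD lD l'D Zll'; have := ZS_dvdz (l'%:Z - l%:Z) D pD.
rewrite rmorphB => /(_ Zll').
rewrite dvdzE; apply: contraTeq; rewrite eq_sym -distn_eq0 => ll'.
by rewrite absz_nat gtnNdvd ?lt0n //; lia.
Qed.

Lemma ZS_congr_nat {x} {D : nat} : x \in ZS ps -> pi^'.-nat D ->
  exists2 l : nat, (l < D)%N & (x - l%:R) / D%:R \in ZS ps.
Proof.
move=> Zx pD; have /ZS_scaleP [N pN /intrP [z xN]] := Zx.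
have D_gt0 : (0 < D)%N by case/andP: pD.
have D0 : D%:R != 0 :> rat by rewrite pnatr_eq0 -lt0n.
have [u [v bez]] := coprime_rat_bezout (pnat_coprime pN pD).
(* x = z / N and u N = 1 (mod D), so x = z u (mod D). *)
set r := ((z * u) %% D%:Z)%Z; set q := ((z * u) %/ D%:Z)%Z.
have r_ge0 : 0 <= r by rewrite modz_ge0 // eqz_nat -lt0n.
have rD : r < D%:Z by rewrite ltz_pmod // ltz_nat.
exists `|r|%N; first by rewrite -ltz_nat gez0_abs.
have -> : (x - `|r|%N%:R) / D%:R = x * v%:~R + q%:~R.
  have zu : (z * u)%:~R = q%:~R * D%:R + `|r|%N%:R :> rat.
    by rewrite natr_absz ger0_norm // -[D%:R]/(D%:Z)%:~R -rmorphM -rmorphD -divz_eq.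
  apply: (mulIf D0); rewrite mulfVK //.
  have -> : `|r|%N%:R = (z * u)%:~R - q%:~R * D%:R :> rat by rewrite zu; ring.
  rewrite rmorphM /= -xN; apply/eqP; rewrite -subr_eq0; apply/eqP.
  transitivity (x * (1 - (u%:~R * N%:R + v%:~R * D%:R))); first ring.
  by rewrite bez subrr mulr0.
by rewrite rpredD ?rpredM ?rpred_int.
Qed.

End SIntegers.

Lemma partn_primes (pi : nat_pred) (m : nat) :
  partn m pi = (\prod_(p <- primes m | p \in pi) p ^ logn p m)%N.
Proof.
case: m => [|m]; first by rewrite partn0 big_nil.
rewrite /partn -(filter_pi_of (ltnSn m.+1)) big_filter_cond big_mkcond [RHS]big_mkcond.
apply: eq_bigr => p _; case: (p \in pi); rewrite ?andbF ?andbT //=.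
by case: ifPn => //; rewrite -logn_gt0 -eqn0Ngt => /eqP ->.
Qed.

Lemma dSE ps n : dS ps n = partn `|numq n| (piS ps)^'.
Proof. by rewrite partn_primes. Qed.

Lemma dS_pnat ps n : (piS ps)^'.-nat (dS ps n).
Proof. by rewrite dSE part_pnat. Qed.

Lemma dS_unit {ps n} : n \in ZS ps -> n != 0 ->
  n / (dS ps n)%:R \in ZS ps /\ (dS ps n)%:R / n \in ZS ps.
Proof.
move=> Zn n0; rewrite dSE; set N := `|numq n|%N.
set P := partn N (piS ps); set d := partn N (piS ps)^'.
set s : rat := (-1) ^+ (numq n < 0)%R.
have N0 : (0 < N)%N by rewrite absz_gt0 numq_eq0.
have d0 : d%:R != 0 :> rat by rewrite pnatr_eq0 -lt0n part_gt0.
have P0 : P%:R != 0 :> rat by rewrite pnatr_eq0 -lt0n part_gt0.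
have s0 : s != 0 by rewrite signr_eq0.
have nE : n = s * (P * d)%N%:R / (denq n)%:~R.
  rewrite partnC // -[LHS]divq_num_den [in LHS](intEsign (numq n)).
  by rewrite rmorphM /= rmorph_sign.
have den0 : (denq n)%:~R != 0 :> rat by rewrite intr_eq0 denq_neq0.
split.
- have -> : n / d%:R = s * P%:R * (denq n)%:~R^-1.
    by rewrite [in LHS]nE natrM; field; apply/andP.
  by rewrite !rpredM ?rpred_nat ?rpred_sign ?ZS_denqV.
- have -> : d%:R / n = s^-1 * (denq n)%:~R * P%:R^-1.
    by rewrite [in LHS]nE natrM; field; rewrite P0 s0 d0 andbT.
  by rewrite invr_sign !rpredM ?rpred_int ?rpred_sign ?ZS_natV ?part_pnat.
Qed.

Section SubringMatrices.
Variables (R : comPzRingType) (S : subringClosed R).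

Lemma det_mxOver n (A : 'M[R]_n) : A \is a mxOver S -> \det A \in S.
Proof.
move=> /mxOverP AS; apply: rpred_sum => s _.
by rewrite rpredM ?rpred_sign // rpred_prod // => i _; apply: AS.
Qed.

Lemma adj_mxOver n (A : 'M[R]_n) : A \is a mxOver S -> \adj A \is a mxOver S.
Proof.
move=> AS; apply/mxOverP => i j; rewrite mxE rpredM ?rpred_sign ?det_mxOver //.
by apply/mxOverP => k l; rewrite !mxE; apply: (mxOverP AS).
Qed.

End SubringMatrices.

Local Notation i0 := (ord0 : 'I_2).
Local Notation i1 := (ord_max : 'I_2).

Lemma vec2_eta (v : 'cV[rat]_2) : v = vec2 (v i0 ord0) (v i1 ord0).
Proof.
apply/matrixP => i j; rewrite !mxE [j]ord1.
by case: i => [[|[|//]] ?]; congr (v _ _); apply: val_inj.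
Qed.

Lemma vec2_inj a b a' b' : vec2 a b = vec2 a' b' -> a = a' /\ b = b'.
Proof. by move=> /matrixP E; have := E i0 ord0; have := E i1 ord0; rewrite !mxE. Qed.

Lemma mulmx_vec2 (A : 'M[rat]_2) a b :
  A *m vec2 a b = vec2 (A i0 i0 * a + A i0 i1 * b) (A i1 i0 * a + A i1 i1 * b).
Proof.
apply/matrixP => i j; rewrite !mxE big_ord_recl big_ord1 !mxE /=.
by case: i => [[|[|//]] ?]; congr (A _ _ * _ + A _ _ * _); apply: val_inj.
Qed.

Lemma det_mx22 (R : comPzRingType) (A : 'M[R]_2) :
  \det A = A i0 i0 * A i1 i1 - A i0 i1 * A i1 i0.
Proof.
rewrite (expand_det_row _ i0) big_ord_recl big_ord1 /cofactor !det_mx11 !mxE /=.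
have -> : lift i0 0 = i1 by apply: val_inj.
have -> : lift i1 0 = i0 by apply: val_inj.
by rewrite /bump /= expr0 expr1; ring.
Qed.

Lemma pairmx_mulmx g v w : pairmx (g *m v) (g *m w) = g *m pairmx v w.
Proof.
apply/matrixP => i j; rewrite !mxE.
by case: ifP => j0; apply: eq_bigr => k _; rewrite mxE j0.
Qed.

Lemma pairmx_e1 v w : pairmx v w *m e1 = v.
Proof. by rewrite /e1 mulmx_vec2 !mxE /= !mulr1 !mulr0 !addr0 [RHS]vec2_eta. Qed.

Lemma mxOver_vec2 (S : {pred rat}) a c :
  a \in S -> c \in S -> vec2 a c \is a mxOver S.
Proof. by move=> Sa Sc; apply/mxOverP => i j; rewrite mxE; case: ifP. Qed.

Lemma mxOver_pairmx (S : {pred rat}) v w :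
  v \is a mxOver S -> w \is a mxOver S -> pairmx v w \is a mxOver S.
Proof.
move=> /mxOverP Sv /mxOverP Sw; apply/mxOverP => i j; rewrite mxE.
by case: ifP.
Qed.

Section SL2.
Context {ps : seq nat}.

Lemma SL2ZSP g : inSL2ZS ps g <-> g \is a mxOver (ZS ps) /\ \det g = 1.
Proof. by split=> -[/(@mxOverP _ _ _ (ZS ps)) Zg dg]. Qed.

Lemma SL2ZS_mul g h : inSL2ZS ps g -> inSL2ZS ps h -> inSL2ZS ps (g *m h).
Proof.
move=> /SL2ZSP[Zg dg] /SL2ZSP[Zh dh]; apply/SL2ZSP.
by rewrite mxOverM // det_mulmx dg dh mulr1.
Qed.

Lemma SL2ZS_adj g : inSL2ZS ps g -> inSL2ZS ps (\adj g).
Proof.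
move=> /SL2ZSP[Zg dg]; apply/SL2ZSP; split; first exact: adj_mxOver.
by have := congr1 determinant (mul_adj_mx g); rewrite det_mulmx dg mulr1 det1.
Qed.

Lemma PZS2_mulmx g v : inSL2ZS ps g -> inPZS2 ps v -> inPZS2 ps (g *m v).
Proof.
by move=> Sg [h [Sh ->]]; exists (g *m h); rewrite mulmxA; split => //; apply: SL2ZS_mul.
Qed.

Lemma PZS2_bezout a c x y : a \in ZS ps -> c \in ZS ps -> x \in ZS ps -> y \in ZS ps ->
  a * x + c * y = 1 -> inPZS2 ps (vec2 a c).
Proof.
move=> Za Zc Zx Zy bez; exists (pairmx (vec2 a c) (vec2 (- y) x)).
split; last by rewrite pairmx_e1.
apply/SL2ZSP; split; first by rewrite mxOver_pairmx ?mxOver_vec2 ?rpredN.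
by rewrite det_mx22 !mxE /= -[RHS]bez; ring.
Qed.

Lemma e1_PZS2 : inPZS2 ps e1.
Proof. by apply: (@PZS2_bezout _ _ 1 0); rewrite ?rpred0 ?rpred1 ?mulr0 ?mulr1 ?addr0. Qed.

Lemma same_orbit_mull v1 v2 w1 w2 h : inSL2ZS ps h ->
  same_orbit ps v1 v2 w1 w2 -> same_orbit ps v1 v2 (h *m w1) (h *m w2).
Proof.
move=> Sh [g [Sg [<- <-]]]; exists (h *m g); rewrite !mulmxA.
by split => //; apply: SL2ZS_mul.
Qed.

End SL2.

Section Orbits.
Variables (ps : seq nat) (n : rat).
Hypotheses (Zn : n \in ZS ps) (n0 : n != 0).
Local Notation d := (dS ps n).

Lemma inDn_mulmx g v1 v2 : inSL2ZS ps g -> inDn ps n v1 v2 ->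
  inDn ps n (g *m v1) (g *m v2).
Proof.
move=> Sg [P1 [P2 dn]]; split; [|split]; try exact: PZS2_mulmx.
by rewrite pairmx_mulmx det_mulmx dn; case: Sg => _ ->; rewrite mul1r.
Qed.

Lemma rep_col2_Dn l : coprime l d -> inDn ps n e1 (rep_col2 l n).
Proof.
move=> cop; have [_ Zdn] := dS_unit Zn n0.
have [a [b bez]] := coprime_rat_bezout cop.
split; [exact: e1_PZS2 | split; last by rewrite det_mx22 !mxE /=; ring].
apply: (@PZS2_bezout _ _ _ a%:~R (b%:~R * (d%:R / n))) => //.
- exact: rpred_nat.
- exact: rpred_int.
- by rewrite rpredM ?rpred_int.
by rewrite -[RHS]bez; field.
Qed.

Lemma SL2ZS_col0_orbit m : inSL2ZS ps m -> m i1 i0 = n ->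
  exists l, [/\ (l < d)%N, coprime l d & same_orbit ps e1 (rep_col2 l n) e1 (m *m e1)].
Proof.
move=> /SL2ZSP[/mxOverP Zm dm] mn; have [Znd Zdn] := dS_unit Zn n0.
have pd := dS_pnat ps n.
have d0 : d%:R != 0 :> rat by rewrite pnatr_eq0 -lt0n; case/andP: pd.
have [l lD Zl] := ZS_congr_nat (Zm i0 i0) pd.
set t := (m i0 i0 - l%:R) / n.
have Zt : t \in ZS ps.
  have -> : t = (m i0 i0 - l%:R) / d%:R * (d%:R / n) by rewrite /t; field; rewrite n0 d0.
  exact: rpredM.
have m00 : m i0 i0 = l%:R + t * n by rewrite /t; field; rewrite n0.
exists l; split => //.
- (* [\det m = 1] with [m i0 i0 = l + t n] reads l m11 + d ((t m11 - m01) n / d) = 1. *)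
  apply: (ZS_bezout_coprime (m i1 i1) ((t * m i1 i1 - m i0 i1) * (n / d%:R)) pd).
  + exact: Zm.
  + exact: rpredM (rpredB (rpredM Zt (Zm _ _)) (Zm _ _)) Znd.
  + by rewrite -[RHS]dm det_mx22 m00 mn; field.
exists (pairmx e1 (vec2 t 1)); split; [apply/SL2ZSP; split | split].
- by rewrite mxOver_pairmx ?mxOver_vec2 ?rpred0 ?rpred1.
- by rewrite det_mx22 !mxE /=; ring.
- exact: pairmx_e1.
- by rewrite /rep_col2 /e1 !mulmx_vec2 !mxE /= m00 mn; congr vec2; ring.
Qed.

Lemma inDn_orbit_rep v1 v2 : inDn ps n v1 v2 ->
  exists l, [/\ (l < d)%N, coprime l d & same_orbit ps e1 (rep_col2 l n) v1 v2].
Proof.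
move=> [[h [Sh ->]] [[k [Sk ->]] dn]]; have [_ dh] := Sh.
have [m Sm km] : exists2 m, inSL2ZS ps m & k *m e1 = h *m (m *m e1).
  exists (\adj h *m k); first by apply: SL2ZS_mul => //; apply: SL2ZS_adj.
  by rewrite !mulmxA mul_mx_adj dh mul1mx.
have mn : m i1 i0 = n.
  move: dn; rewrite km pairmx_mulmx det_mulmx dh mul1r /e1 mulmx_vec2.
  by rewrite det_mx22 !mxE /= => <-; ring.
have [l [lD cop orb]] := SL2ZS_col0_orbit _ Sm mn.
by exists l; split => //; rewrite km; apply: same_orbit_mull.
Qed.

Lemma rep_col2_orbit_inj l l' : (l < d)%N -> (l' < d)%N ->
  same_orbit ps e1 (rep_col2 l n) e1 (rep_col2 l' n) -> l = l'.
Proof.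
move=> lD l'D [g [/SL2ZSP[/mxOverP Zg _] [ge1 gl]]]; have [Znd _] := dS_unit Zn n0.
move: ge1; rewrite {2}/e1 mulmx_vec2 !mulr1 !mulr0 !addr0 => /vec2_inj[g00 g10].
move: gl; rewrite mulmx_vec2 g00 g10 => /vec2_inj[l'E _].
apply: (ZS_congr_nat_eq (dS_pnat ps n) lD l'D).
have -> : (l'%:R - l%:R) / d%:R = g i0 i1 * (n / d%:R) by rewrite -l'E; ring.
exact: rpredM.
Qed.

End Orbits.

Lemma card_coprime_ord D : #|[set l : 'I_D | coprime l D]| = totient D.
Proof.
rewrite totient_count_coprime big_mkord -sum1_card big_mkcond /=.
by apply: eq_bigr => i _; rewrite inE coprime_sym; case: coprime.
Qed.

Theorem lemma3p1 (ps : seq nat) (n : rat) :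
  all prime ps -> uniq ps ->
  inZS ps n -> n != 0 ->
  (* invariance of D_n under the diagonal action of SL_2(Z_S) *)
  (forall g v1 v2, inSL2ZS ps g -> inDn ps n v1 v2 ->
     inDn ps n (g *m v1) (g *m v2)) /\
  (* the index set of representatives has phi(d(n)) elements *)
  #|[set l : 'I_(dS ps n) | coprime l (dS ps n)]| = totient (dS ps n) /\
  (* the representatives lie in D_n *)
  (forall l : nat, (l < dS ps n)%N -> coprime l (dS ps n) ->
     inDn ps n e1 (rep_col2 l n)) /\
  (* every element of D_n lies in the orbit of some representative *)
  (forall v1 v2, inDn ps n v1 v2 ->
     exists l : nat, [/\ (l < dS ps n)%N, coprime l (dS ps n) &
       same_orbit ps e1 (rep_col2 l n) v1 v2]) /\
  (* distinct representatives lie in distinct orbits *)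
  (forall l l' : nat, (l < dS ps n)%N -> coprime l (dS ps n) ->
     (l' < dS ps n)%N -> coprime l' (dS ps n) ->
     same_orbit ps e1 (rep_col2 l n) e1 (rep_col2 l' n) -> l = l').
Proof.
(* Only the primes listed in [ps] matter, so [ps] need be neither prime nor uniq. *)
move=> _ _ Zn n0; split; first exact: inDn_mulmx.
split; first exact: card_coprime_ord.
split; first by move=> l _; apply: rep_col2_Dn.
split; first exact: inDn_orbit_rep.
by move=> l l' lD _ l'D _; apply: rep_col2_orbit_inj.
Qed.
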